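(* The forgetful functor $\Phi:\mathrm{OS}_B^{\mathrm{op}}\to\mathrm{FS}_B^{\mathrm{op}}$ has property (F).
   Context: $\mathrm{FS}_B$: objects $(E,\sigma)$ with $E$ a finite set and $\sigma$ an involution with a unique fixed point; morphisms are surjective equivariant maps. $\mathrm{OS}_B$: objects $(E,\sigma)$ with $E$ totally ordered finite, $\sigma$ an order-reversing involution with unique fixed point $0$; with $-e:=\sigma(e)$, $E^+=\{e>0\}$, $|e|=\max\{\pm e\}$, $\mathrm{init}\,D=\min\{|e|:e\in D\}$, the morphisms $(E_1,\sigma_1)\to(E_2,\sigma_2)$ are surjective equivariant maps $\varphi$ with (i) $\mathrm{init}\,\varphi^{-1}(e)\in\varphi^{-1}(e)$ for all $e\in E_2^+$ and (ii) $\mathrm{init}\,\varphi^{-1}(e)<\mathrm{init}\,\varphi^{-1}(f)$ for all $e<f$ in $E_2^+$. A functor $\Phi:\mathcal C\to\mathcal C'$ has property (F) if for every object $x$ of $\mathcal C'$ there are finitely many objects $y_1,\dots,y_s$ of $\mathcal C$ and morphisms $\varphi_i:x\to\Phi(y_i)$ such that for every object $y$ of $\mathcal C$ and morphism $\varphi:x\to\Phi(y)$ there are $i$ and a morphism $\psi:y_i\to y$ in $\mathcal C$ with $\varphi=\Phi(\psi)\circ\varphi_i$. *)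

From mathcomp Require Import all_boot.
Set Implicit Arguments. Unset Strict Implicit. Unset Printing Implicit Defensive.

Record fsB := FSB {
  fs_car :> finType;
  fs_sig : fs_car -> fs_car;
  fs_invol : involutive fs_sig;
  fs_fix : exists! x, fs_sig x = x }.

Definition fs_hom (X Y : fsB) (f : X -> Y) : Prop :=
  (forall y : Y, exists x : X, f x = y) /\
  (forall x : X, f (@fs_sig X x) = @fs_sig Y (f x)).

Record osB := OSB {
  os_car :> finType;
  os_le : rel os_car;
  os_le_refl : reflexive os_le;
  os_le_anti : antisymmetric os_le;
  os_le_trans : transitive os_le;
  os_le_total : total os_le;
  os_sig : os_car -> os_car;
  os_invol : involutive os_sig;
  os_rev : forall x y, os_le x y -> os_le (os_sig y) (os_sig x);
  os_fix : exists! x, os_sig x = x }.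

Definition os_lt (E : osB) (x y : E) : bool := os_le x y && (x != y).

Definition os_pos (E : osB) (e : E) : bool :=
  [exists z, (os_sig z == z) && os_lt z e].

Definition os_abs (E : osB) (e : E) : E :=
  if os_le (os_sig e) e then e else os_sig e.

Definition is_init (E : osB) (D : pred E) (m : E) : Prop :=
  (exists2 d, D d & m = os_abs d) /\ (forall d, D d -> os_le m (os_abs d)).

Definition os_hom (E1 E2 : osB) (phi : E1 -> E2) : Prop :=
  [/\ (forall y : E2, exists x : E1, phi x = y),
      (forall x : E1, phi (os_sig x) = os_sig (phi x)),
      (forall e : E2, os_pos e ->
         forall m, is_init (fun x => phi x == e) m -> phi m = e) &
      (forall e f : E2, os_pos e -> os_pos f -> os_lt e f ->
         forall m n, is_init (fun x => phi x == e) m ->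
                     is_init (fun x => phi x == f) n -> os_lt m n)].

Lemma os_fs_invol (E : osB) : involutive (@os_sig E).
Proof. exact: os_invol. Qed.
Lemma os_fs_fix (E : osB) : exists! x, @os_sig E x = x.
Proof. exact: os_fix. Qed.

Definition Phi (E : osB) : fsB := @FSB (os_car E) (@os_sig E) (@os_fs_invol E) (@os_fs_fix E).
(* Phi acts as the identity on morphisms (same underlying map). *)

From mathcomp Require Import all_boot.
Set Implicit Arguments. Unset Strict Implicit. Unset Printing Implicit Defensive.

(* Fix X in FS_B.  The finitely many objects of OS_B needed for
   property (F) are the OS_B-structures carried by X itself: total orders on
   the finite set X that are reversed by the involution of X.  They are indexed
   by a finite type of boolean relations, and each phi_i is the identity of X.
   Given an object Z of OS_B and a surjective equivariant f : Z -> X, pick in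
   every fibre of f its element of smallest absolute value; this defines a
   section h : X -> Z of f.  Minimisers in a fibre are unique (two elements of
   equal absolute value are equal or opposite, and opposite elements can only
   share the fibre of the fixed point, whose minimiser is 0), hence h is
   equivariant.  Pulling the order of Z back along h gives an OS_B-structure
   on X, and for it init f^-1(e) = h(e) for every positive e, so f itself is an
   OS_B-morphism and the required factorisation is f = id o f. *)

Section AbsoluteValue.
Variable E : osB.
Implicit Types a b e w z : E.

Lemma abs_cases e : os_abs e = e \/ os_abs e = os_sig e.
Proof. by rewrite /os_abs; case: ifP; [left | right]. Qed.

Lemma abs_sig e : os_abs (os_sig e) = os_abs e.
Proof.
rewrite /os_abs os_invol; case: ifP => le1; case: ifP => le2 //.
- by apply: os_le_anti; rewrite le1 le2.
- by case/orP: (os_le_total e (os_sig e)); rewrite ?le1 ?le2.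
Qed.

Lemma abs_eq a b : os_abs a = os_abs b -> a = b \/ a = os_sig b.
Proof.
have a_abs : a = os_abs a \/ a = os_sig (os_abs a).
  by case: (abs_cases a) => ->; [left | right; rewrite os_invol].
case: (abs_cases b) => -> eq_ab; rewrite eq_ab in a_abs; case: a_abs => ->;
  by [left | right | right; rewrite os_invol | left; rewrite os_invol].
Qed.

Definition os_rank z : nat := #|[pred w | os_le w z]|.

Lemma os_le_rank a b : os_le a b = (os_rank a <= os_rank b).
Proof.
apply/idP/idP => [le_ab | ].
  by apply: subset_leq_card; apply/subsetP => w; rewrite !inE => /os_le_trans; apply.
apply: contraTT => le_ab; have le_ba : os_le b a.
  by case/orP: (os_le_total a b) => //; rewrite (negbTE le_ab).
rewrite -ltnNge; apply: proper_card; apply/properP; split.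
  by apply/subsetP => w; rewrite !inE => /os_le_trans; apply.
by exists a; rewrite !inE ?os_le_refl.
Qed.

Lemma exists_abs_min (P : pred E) z1 : P z1 ->
  exists2 z, P z & forall w, P w -> os_le (os_abs z) (os_abs w).
Proof.
move=> Pz1; case: (arg_minnP (fun z => os_rank (os_abs z)) Pz1) => z Pz min_z.
by exists z => // w Pw; rewrite os_le_rank; apply: min_z.
Qed.

Variable o : E.
Hypothesis o_fix : os_sig o = o.

Lemma abs_fix : os_abs o = o.
Proof. by rewrite /os_abs o_fix os_le_refl. Qed.

Lemma abs_ge e : os_le o e -> os_abs e = e.
Proof.
move=> le_oe; rewrite /os_abs; have := os_rev le_oe; rewrite o_fix => le_eo.
by rewrite (os_le_trans le_eo le_oe).
Qed.

Lemma le_abs e : os_le o (os_abs e).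
Proof.
case/orP: (os_le_total o e) => [le_oe | le_eo]; first by rewrite abs_ge.
have le_o_sig : os_le o (os_sig e) by rewrite -o_fix os_rev.
by rewrite -abs_sig abs_ge.
Qed.

Lemma abs_eq_fix e : os_abs e = o -> e = o.
Proof. by case: (abs_cases e) => -> // abs_e; rewrite -(os_invol e) abs_e o_fix. Qed.

End AbsoluteValue.
Section OrdersOnX.
Variable X : fsB.
Implicit Types x y : X.

(* A relation on X, coded as a finite boolean function, that is a total order
   reversed by the involution of X; these are the OS_B-structures on X. *)
Definition compatible_order (r : {ffun X * X -> bool}) : bool :=
  [&& [forall x, r (x, x)],
      [forall x, forall y, (r (x, y) && r (y, x)) ==> (x == y)],
      [forall x, forall y, forall z, (r (x, y) && r (y, z)) ==> r (x, z)],
      [forall x, forall y, r (x, y) || r (y, x)] &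
      [forall x, forall y, r (x, y) ==> r (fs_sig y, fs_sig x)]].

Definition order_on_X : finType := {r : {ffun X * X -> bool} | compatible_order r}.

Section OneOrder.
Variable t : order_on_X.
Let le : rel X := fun x y => val t (x, y).
Let t_compatible : compatible_order (val t) := valP t.

Lemma order_refl : reflexive le.
Proof. by case/and5P: t_compatible => /forallP refl _ _ _ _ x; apply: refl. Qed.

Lemma order_anti : antisymmetric le.
Proof.
case/and5P: t_compatible => _ /forallP anti _ _ _ x y le_xy.
by apply/eqP; move: (anti x) => /forallP /(_ y) /implyP; apply.
Qed.

Lemma order_trans : transitive le.
Proof.
case/and5P: t_compatible => _ _ /forallP trans _ _ y x z le_xy le_yz.
by move: (trans x) => /forallP /(_ y) /forallP /(_ z) /implyP; apply; apply/andP.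
Qed.

Lemma order_total : total le.
Proof. by case/and5P: t_compatible => _ _ _ /forallP tot _ x; move/forallP: (tot x). Qed.

Lemma order_rev x y : le x y -> le (fs_sig y) (fs_sig x).
Proof.
by case/and5P: t_compatible => _ _ _ _ /forallP rev; move/forallP/(_ y)/implyP: (rev x).
Qed.

End OneOrder.

(* The object of OS_B with underlying involutive set X ordered by t; its image
   under Phi is X, up to the identity map. *)
Definition os_of_order (t : order_on_X) : osB :=
  @OSB X (fun x y => val t (x, y)) (@order_refl t) (@order_anti t)
    (@order_trans t) (@order_total t) (@fs_sig X) (@fs_invol X)
    (@order_rev t) (@fs_fix X).

Lemma fs_fix_unique x y : fs_sig x = x -> fs_sig y = y -> x = y.
Proof. by case: (fs_fix X) => c [_ uniq_c] /uniq_c <- /uniq_c <-. Qed.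

End OrdersOnX.

Section MinimalSection.
Variables (X : fsB) (Z : osB) (f : Z -> X).
Hypothesis f_surj : forall x : X, exists z : Z, f z = x.
Hypothesis f_equiv : forall z : Z, f (os_sig z) = fs_sig (f z).
Variable z0 : Z.
Hypothesis z0_fix : os_sig z0 = z0.
Implicit Types x y : X.

Definition fibre_min x (z : Z) : Prop :=
  f z = x /\ forall w, f w = x -> os_le (os_abs z) (os_abs w).

Definition min_section x : Z :=
  odflt z0 [pick z | (f z == x) &&
                    [forall w, (f w == x) ==> os_le (os_abs z) (os_abs w)]].

(* Fibres are nonempty by surjectivity, so h x minimises its fibre. *)
Lemma min_sectionP x : fibre_min x (min_section x).
Proof.
rewrite /min_section; case: pickP => [z /andP[/eqP fz /forallP min_z] | no_min] /=.
  by split => // w fw; move/implyP: (min_z w); apply; rewrite fw.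
case: (f_surj x) => z1 fz1.
have [z /= /eqP fz min_z] := @exists_abs_min Z (fun z => f z == x) z1 (introT eqP fz1).
by case/negP: (no_min z); rewrite fz eqxx; apply/forallP => w; apply/implyP => /min_z.
Qed.

Lemma min_sectionK x : f (min_section x) = x.
Proof. by case: (min_sectionP x). Qed.

Lemma fibre_min_fix x z : fs_sig x = x -> fibre_min x z -> z = z0.
Proof.
move=> x_fix [fz min_z]; apply: (abs_eq_fix z0_fix); apply: os_le_anti.
rewrite le_abs // andbT -[X in os_le _ X](abs_fix z0_fix); apply: min_z.
by apply: fs_fix_unique; rewrite // -f_equiv z0_fix.
Qed.

Lemma fibre_min_unique x z z' : fibre_min x z -> fibre_min x z' -> z = z'.
Proof.
move=> min_z min_z'; case: (boolP (fs_sig x == x)) => [/eqP x_fix | x_nfix].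
  by rewrite (fibre_min_fix x_fix min_z) (fibre_min_fix x_fix min_z').
case: min_z min_z' => [fz min_z] [fz' min_z'].
have [// | opp] : z = z' \/ z = os_sig z'.
  by apply: abs_eq; apply: os_le_anti; rewrite min_z // min_z'.
by case/negP: x_nfix; apply/eqP; rewrite -{2}fz opp f_equiv fz'.
Qed.

(* h is equivariant, by uniqueness of fibre minimisers. *)
Lemma min_section_equiv x : min_section (fs_sig x) = os_sig (min_section x).
Proof.
apply: (fibre_min_unique (min_sectionP _)); split; first by rewrite f_equiv min_sectionK.
move=> w fw; rewrite abs_sig -(abs_sig w); apply: (proj2 (min_sectionP x)).
by rewrite f_equiv fw fs_invol.
Qed.

Lemma min_section_fix x : fs_sig x = x -> min_section x = z0.
Proof. by move=> x_fix; exact: fibre_min_fix x_fix (min_sectionP x). Qed.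

Definition pullback_order : {ffun X * X -> bool} :=
  [ffun p => os_le (min_section p.1) (min_section p.2)].

Lemma pullback_order_compatible : compatible_order pullback_order.
Proof.
apply/and5P; split; apply/forallP => x; try apply/forallP => y.
- by rewrite ffunE os_le_refl.
- apply/implyP; rewrite !ffunE => /os_le_anti h_xy.
  by rewrite -(min_sectionK x) h_xy min_sectionK.
- apply/forallP => z; apply/implyP; rewrite !ffunE => /andP[].
  exact: os_le_trans.
- by rewrite !ffunE os_le_total.
- by apply/implyP; rewrite !ffunE /= !min_section_equiv; apply: os_rev.
Qed.

Definition pullback_structure : order_on_X X :=
  exist (fun r => compatible_order r) pullback_order pullback_order_compatible.

Definition X_pullback : osB := os_of_order pullback_structure.

Lemma init_fibre_pos (e : X_pullback) m :
  os_pos e -> is_init (fun z => f z == e) m -> m = min_section e.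
Proof.
case/existsP=> x /andP[/eqP x_fix /andP[le_xe _]] [[d /eqP fd ->] min_m].
have le_z0_he : os_le z0 (min_section e).
  by move: le_xe; rewrite /= ffunE /= (min_section_fix x_fix).
have abs_he : os_abs (min_section e) = min_section e := abs_ge z0_fix le_z0_he.
apply: os_le_anti; apply/andP; split.
  by rewrite -abs_he; apply: min_m; rewrite /= min_sectionK.
by rewrite -[X in os_le X _]abs_he; apply: (proj2 (min_sectionP e)).
Qed.

Lemma f_os_hom : @os_hom Z X_pullback f.
Proof.
split => //.
- by move=> e pos_e m /(init_fibre_pos pos_e) ->; apply: min_sectionK.
- move=> e e' pos_e pos_e' /andP[le_ee' ne_ee'] m n.
  move=> /(init_fibre_pos pos_e) -> /(init_fibre_pos pos_e') ->.
  move: le_ee'; rewrite /os_lt /= ffunE /= => -> /=.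
  by apply: contra ne_ee' => /eqP h_ee'; rewrite -(min_sectionK e) h_ee' min_sectionK.
Qed.

End MinimalSection.

Theorem lemmaF :
  forall X : fsB,
  exists s : nat, exists Y : 'I_s -> osB,
  exists phi : forall i : 'I_s, Phi (Y i) -> X,
    (forall i, fs_hom (phi i)) /\
    (forall (Z : osB) (f : Phi Z -> X), fs_hom f ->
       exists i : 'I_s, exists psi : Z -> Y i,
         os_hom psi /\ (forall z : Z, f z = phi i (psi z))).
Proof.
move=> X.
exists #|order_on_X X|, (fun i => os_of_order (enum_val i)), (fun i x => x).
split; first by move=> i; split => // y; exists y.
move=> Z f [f_surj f_equiv]; case: (os_fix Z) => z0 [z0_fix _].
exists (enum_rank (pullback_structure f_surj f_equiv z0_fix)).
rewrite enum_rankK; exists f; split => //.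
exact: f_os_hom.
Qed.
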